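(* In the setting described in the context, for $x,x'\in X_{\mathfrak L_1}$ one has $\psi_0(x)=\psi_0(x')$ if and only if $x_{[l,\infty)}=x'_{[l,\infty)}$ and there is a vertex $v\in V_L$ of $\mathfrak L_1$ with $\pi_1(x)_{[1,L]},\pi_1(x')_{[1,L]}\in B_L(\Lambda_1,v)$ and $\pi_1(x)_{[1,L]}\sim_v\pi_1(x')_{[1,L]}$.
   Context: $\mathbb Z_+=\{0,1,2,\dots\}$, $\mathbb N=\{1,2,\dots\}$. A $\lambda$-graph system $\mathfrak L=(V,E,\lambda,\iota)$ over a finite alphabet $\Sigma$ consists of finite nonempty pairwise disjoint vertex sets $V_l$ ($l\in\mathbb Z_+$); finite pairwise disjoint edge sets $E_{l,l+1}$, each $e\in E_{l,l+1}$ having a source $s(e)\in V_l$ and a terminal $t(e)\in V_{l+1}$; a labeling map $\lambda:E\to\Sigma$; and surjections $\iota:V_{l+1}\to V_l$; such that every vertex is the source of some edge, every vertex in $V_l$ ($l\ge1$) is the terminal of some edge, and (local property) for all $l\ge1$, $u\in V_{l-1}$, $v\in V_{l+1}$ there is a label-preserving bijection between $\{e\in E_{l,l+1}: \iota(s(e))=u,\ t(e)=v\}$ and $\{e\in E_{l-1,l}: s(e)=u,\ t(e)=\iota(v)\}$. Left-resolving: $t(e)=t(f)$, $\lambda(e)=\lambda(f)$ imply $e=f$. $\Omega_{\mathfrak L}=\{(u^l)_{l}\in\prod_l V_l: \iota(u^{l+1})=u^l\}$. $E_{\mathfrak L}$ = set of $(u,\alpha,w)\in\Omega_{\mathfrak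 L}\times\Sigma\times\Omega_{\mathfrak L}$ such that for each $l$ some $e\in E_{l,l+1}$ has $s(e)=u^l$, $t(e)=w^{l+1}$, $\lambda(e)=\alpha$. $X_{\mathfrak L}$ = set of $x=(\alpha_i,u_i)_{i\in\mathbb N}$ in $\Sigma\times\Omega_{\mathfrak L}$ with $(u_i,\alpha_{i+1},u_{i+1})\in E_{\mathfrak L}$ for all $i$ and $(u_0,\alpha_1,u_1)\in E_{\mathfrak L}$ for some $u_0$; relative product topology; $\sigma_{\mathfrak L}$ the left shift. For such $x$: $x_{[k,\infty)}=(\alpha_i,u_i)_{i\ge k}$; $\pi_{\mathfrak L}(x)=(\alpha_i)_{i\in\mathbb N}$, $\pi_{\mathfrak L}(x)_{[1,k]}=(\alpha_1,\dots,\alpha_k)$; $v^l_n(x)$ denotes the $l$-th coordinate $u_n^l$ of $u_n$. $X_\Lambda=\pi_{\mathfrak L}(X_{\mathfrak L})$, $B_k(X_\Lambda)$ its words of length $k$. Setting: $\mathfrak L_1,\mathfrak L_2$ are left-resolving $\lambda$-graph systems; write $\pi_i=\pi_{\mathfrak L_i}$, $\Lambda_i$ for the presented subshifts. $\psi_0:X_{\mathfrak L_1}\to X_{\mathfrak L_2}$ is a continuous surjection with $\sigma_{\mathfrak L_2}\circ\psi_0=\psi_0\circ\sigma_{\mathfrak L_1}$, and $1\le l\le L$ are integers such that (a) $\psi_0(x)=\psi_0(x')$ implies $x_{[l,\infty)}=x'_{[l,\infty)}$; (b) there is a map $\Psi:B_L(X_{\Lambda_1})\to B_l(X_{\Lambda_2})$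 with $\pi_2(\psi_0(x))_{[1,l]}=\Psi(\pi_1(x)_{[1,L]})$ for all $x\in X_{\mathfrak L_1}$. For $v\in V_L$ (vertices of $\mathfrak L_1$), $B_L(\Lambda_1,v)$ is the set of $\mu\in B_L(X_{\Lambda_1})$ such that $\mu=\pi_1(x)_{[1,L]}$ for some $x\in X_{\mathfrak L_1}$ with $v^L_L(x)=v$. For $\mu,\mu'\in B_L(\Lambda_1,v)$, $\mu\sim_v\mu'$ means: there exist $x,x'\in X_{\mathfrak L_1}$ with $\pi_1(x)_{[1,L]}=\mu$, $\pi_1(x')_{[1,L]}=\mu'$, $v^L_L(x)=v^L_L(x')=v$ and $\psi_0(x)=\psi_0(x')$ (this is an equivalence relation on $B_L(\Lambda_1,v)$). *)

From mathcomp Require Import all_boot.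
Set Implicit Arguments. Unset Strict Implicit. Unset Printing Implicit Defensive.

(* Raw data of a lambda-graph system over the finite alphabet S.
   Vertex set V_l := V l, edge set E_{l,l+1} := E l (disjointness is by typing). *)
Record lgs (S : finType) := LGS {
  V : nat -> finType;
  E : nat -> finType;
  src : forall l, E l -> V l;
  tgt : forall l, E l -> V l.+1;
  lab : forall l, E l -> S;
  liota : forall l, V l.+1 -> V l }.

Arguments V {S} _ _. Arguments E {S} _ _. Arguments src {S _ _}. Arguments tgt {S _ _}.
Arguments lab {S _ _}. Arguments liota {S _ _}.

Definition is_lgs (S : finType) (L : lgs S) : Prop :=
  (forall l, exists v : V L l, True) /\
  (forall l (u : V L l), exists w : V L l.+1, liota w = u) /\
  (forall l (v : V L l), exists e : E L l, src e = v) /\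
  (forall l (v : V L l.+1), exists e : E L l, tgt e = v) /\
  (* local property, for level k.+1 (i.e. l = k+1 >= 1) *)
  (forall k (u : V L k) (v : V L k.+2),
     exists f : {e : E L k.+1 | (liota (src e) == u) && (tgt e == v)} ->
                {e : E L k | (src e == u) && (tgt e == liota v)},
       bijective f /\ forall e, lab (sval (f e)) = lab (sval e)).

Definition left_resolving (S : finType) (L : lgs S) : Prop :=
  forall l (e f : E L l), tgt e = tgt f -> lab e = lab f -> e = f.

Definition Omega (S : finType) (L : lgs S) :=
  {u : forall l, V L l | forall l, liota (u l.+1) = u l}.

(* A (candidate) point of X_L: x n = (alpha_{n+1}, u_{n+1}) (0-based storage
   of the 1-based sequence (alpha_i, u_i)_{i in N}). *)
Definition Point (S : finType) (L : lgs S) := nat -> (S * Omega L)%type.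

Definition edgeE (S : finType) (L : lgs S) (u : Omega L) (a : S) (w : Omega L) : Prop :=
  forall l, exists e : E L l, src e = sval u l /\ tgt e = sval w l.+1 /\ lab e = a.

Definition inX (S : finType) (L : lgs S) (x : Point L) : Prop :=
  (forall n, edgeE (x n).2 (x n.+1).1 (x n.+1).2) /\
  (exists u0 : Omega L, edgeE u0 (x 0).1 (x 0).2).

Definition shift (S : finType) (L : lgs S) (x : Point L) : Point L := fun n => x n.+1.

Definition agree (S : finType) (L : lgs S) (N : nat) (x x' : Point L) : Prop :=
  forall n, n < N -> (x n).1 = (x' n).1 /\
                     forall l, l < N -> sval (x n).2 l = sval (x' n).2 l.

Definition continuous_on_X (S1 S2 : finType) (L1 : lgs S1) (L2 : lgs S2)
  (f : Point L1 -> Point L2) : Prop :=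
  forall x, inX x -> forall i l, exists N, forall x', inX x' -> agree N x x' ->
    (f x' i).1 = (f x i).1 /\ sval (f x' i).2 l = sval (f x i).2 l.

(* x_{[k,oo)} = (alpha_i, u_i)_{i >= k}, for k >= 1 *)
Definition tail_from (S : finType) (L : lgs S) (k : nat) (x : Point L) : Point L :=
  fun n => x (n + k.-1).

Definition word (S : finType) (L : lgs S) (x : Point L) (k : nat) : seq S :=
  mkseq (fun n => (x n).1) k.

(* v^l_n(x) = u_n^l, for n >= 1 *)
Definition vert (S : finType) (L : lgs S) (x : Point L) (l n : nat) : V L l :=
  sval (x n.-1).2 l.

Definition inBv (S : finType) (L : lgs S) (K : nat) (v : V L K) (mu : seq S) : Prop :=
  exists x : Point L, inX x /\ word x K = mu /\ vert x K K = v.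

Definition simv (S1 S2 : finType) (L1 : lgs S1) (L2 : lgs S2)
  (psi0 : Point L1 -> Point L2) (K : nat) (v : V L1 K) (mu mu' : seq S1) : Prop :=
  exists x x' : Point L1, inX x /\ inX x' /\ word x K = mu /\ word x' K = mu' /\
    vert x K K = v /\ vert x' K K = v /\ psi0 x = psi0 x'.

(* Forward: [psi0 x = psi0 x'] forces equal tails, so [x] and [x'] pass through
   the same vertex [v] at time [K >= l] and are themselves witnesses of
   [word x K ~_v word x' K].  Backward: since [psi0] commutes with the shift,
   equal tails of [x], [x'] from time [l] give equal tails of [psi0 x], [psi0 x']
   from time [l]; the witnesses of [~_v] together with [Psi] give equal first
   [l] symbols of [psi0 x], [psi0 x'].  Left-resolvingness of [L2] then
   determines the vertex at each earlier time from the next vertex and the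
   symbol, so the two images agree everywhere. *)
From Stdlib Require Import FunctionalExtensionality ProofIrrelevance.
From mathcomp Require Import all_boot.

Set Implicit Arguments.
Unset Strict Implicit.
Unset Printing Implicit Defensive.

Lemma Omega_eq (S : finType) (L : lgs S) (u w : Omega L) :
  (forall m, sval u m = sval w m) -> u = w.
Proof.
case: u w => [u pu] [w pw] /= eq_uw.
have {}eq_uw : u = w by apply: functional_extensionality_dep.
by subst w; congr exist; apply: proof_irrelevance.
Qed.

Lemma iter_shift (S : finType) (L : lgs S) i (x : Point L) n :
  iter i (@shift S L) x n = x (n + i).
Proof. by elim: i n => [|i IH] n /=; rewrite ?addn0 // /shift IH addnS. Qed.

Lemma inX_shift (S : finType) (L : lgs S) (x : Point L) :
  inX x -> inX (shift x).
Proof. by case=> Hx _; split => [n|]; [exact: Hx | exists (x 0).2; exact: Hx]. Qed.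

Lemma inX_iter_shift (S : finType) (L : lgs S) i (x : Point L) :
  inX x -> inX (iter i (@shift S L) x).
Proof. by elim: i => [|i IH] //= Hx; apply/inX_shift/IH. Qed.

Lemma tail_from_eq_at (S : finType) (L : lgs S) k (x x' : Point L) :
  tail_from k x = tail_from k x' -> forall m, k.-1 <= m -> x m = x' m.
Proof.
move=> eq_tail m km; have := congr1 (fun y => y (m - k.-1)) eq_tail.
by rewrite /tail_from subnK.
Qed.

Lemma word_eq_fst (S : finType) (L : lgs S) n (p q : Point L) :
  word p n = word q n -> forall i, i < n -> (p i).1 = (q i).1.
Proof.
move=> eq_word i lt_in; have := congr1 (nth (p i).1 ^~ i) eq_word.
by rewrite !nth_mkseq.
Qed.

Section LeftResolving.

Variables (S : finType) (L : lgs S).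
Hypothesis LR : left_resolving L.

(* At every level the vertex of [p] at time [i] is the source of the unique
   edge with the given label ending at the vertex of time [i+1]. *)
Lemma left_resolving_prev_vertex (p q : Point L) i :
  inX p -> inX q -> p i.+1 = q i.+1 -> (p i).2 = (q i).2.
Proof.
move=> [Hp _] [Hq _] eq_next; apply: Omega_eq => m.
have [e [<- [te le]]] := Hp i m.
have [f [<- [tf lf]]] := Hq i m.
by congr src; apply: LR; rewrite ?te ?tf ?le ?lf eq_next.
Qed.

Lemma left_resolving_eq_Point n (p q : Point L) :
  inX p -> inX q -> (forall i, n <= i -> p i = q i) ->
  (forall i, i < n -> (p i).1 = (q i).1) -> p = q.
Proof.
move=> Hp Hq; elim: n => [|n IH] eq_tail eq_fst.
  by apply: functional_extensionality => i; apply: eq_tail.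
apply: IH => [i|i lt_in]; last by apply: eq_fst; apply: ltnW.
rewrite leq_eqVlt => /predU1P[<-|]; last exact: eq_tail.
apply: injective_projections; first exact: eq_fst.
by apply: left_resolving_prev_vertex; rewrite ?eq_tail.
Qed.

End LeftResolving.

Section ShiftCommuting.

Variables (S1 S2 : finType) (L1 : lgs S1) (L2 : lgs S2).
Variable psi0 : Point L1 -> Point L2.
Hypothesis psi0_shift : forall x, inX x -> psi0 (shift x) = shift (psi0 x).

Lemma psi0_iter_shift i x :
  inX x -> psi0 (iter i (@shift S1 L1) x) = iter i (@shift S2 L2) (psi0 x).
Proof.
elim: i => [|i IH] //= Hx.
by rewrite psi0_shift ?IH //; apply: inX_iter_shift.
Qed.

Lemma psi0_eq_at n x x' : inX x -> inX x' ->
  (forall m, n <= m -> x m = x' m) -> forall m, n <= m -> psi0 x m = psi0 x' m.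
Proof.
move=> Hx Hx' eq_tail m nm.
have eq_shifted : iter m (@shift S1 L1) x = iter m (@shift S1 L1) x'.
  apply: functional_extensionality => k; rewrite !iter_shift eq_tail //.
  exact: leq_trans nm (leq_addl _ _).
have := congr1 (fun y => y 0) (congr1 psi0 eq_shifted).
by rewrite !psi0_iter_shift // !iter_shift.
Qed.

End ShiftCommuting.

Theorem lemma7p5 (S1 S2 : finType) (L1 : lgs S1) (L2 : lgs S2)
  (HL1 : is_lgs L1) (HL2 : is_lgs L2)
  (LR1 : left_resolving L1) (LR2 : left_resolving L2)
  (psi0 : Point L1 -> Point L2)
  (psi0_X : forall x, inX x -> inX (psi0 x))
  (psi0_surj : forall y, inX y -> exists x, inX x /\ psi0 x = y)
  (psi0_cont : continuous_on_X psi0)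
  (psi0_shift : forall x, inX x -> psi0 (shift x) = shift (psi0 x))
  (l K : nat) (Hl : 1 <= l) (HlK : l <= K)
  (Ha : forall x x', inX x -> inX x' -> psi0 x = psi0 x' ->
          tail_from l x = tail_from l x')
  (Psi : seq S1 -> seq S2)
  (Hb : forall x, inX x -> word (psi0 x) l = Psi (word x K))
  (x x' : Point L1) (Hx : inX x) (Hx' : inX x') :
  psi0 x = psi0 x' <->
  (tail_from l x = tail_from l x' /\
   exists v : V L1 K, inBv v (word x K) /\ inBv v (word x' K) /\
                      simv psi0 v (word x K) (word x' K)).
Proof.
split=> [eq_psi | [eq_tail [v [_ [_ [y [y' [Hy [Hy' [wy [wy' [_ [_ eq_psi_y]]]]]]]]]]]]].
  have eq_tail := Ha _ _ Hx Hx' eq_psi.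
  have eq_vert : vert x K K = vert x' K K.
    by rewrite /vert (tail_from_eq_at eq_tail) // -!subn1 leq_sub2r.
  split=> //; exists (vert x K K); split; first by exists x.
  split; first by exists x'.
  by exists x, x'.
have eq_word : word (psi0 x) l = word (psi0 x') l.
  by rewrite !Hb // -wy -wy' -!Hb // eq_psi_y.
apply: (left_resolving_eq_Point LR2 (psi0_X _ Hx) (psi0_X _ Hx') (n := l.-1)).
  by apply: (psi0_eq_at psi0_shift Hx Hx'); apply: tail_from_eq_at.
move=> i lt_i; apply: (word_eq_fst eq_word); exact: leq_trans lt_i (leq_pred l).
Qed.
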